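(* Consider the two-camp, two-phase zero-sum game with bias-dependent camp weights described in the context. For either camp and any fixed strategy of the other camp, it is optimal to exhaust the entire budget, and if not, it is optimal to not invest at all. Furthermore, it is an optimal strategy to invest on at most one node in a given phase (i.e., there is a best response in which each of the camp's two phase-investment vectors has at most one nonzero entry).
   Context: A social network has node set $N=\{1,\dots,n\}$ and a real $n\times n$ matrix $\mathbf{w}=(w_{ij})$ with $\sum_j|w_{ij}|<1$ for every $i$; write $\Delta=(\mathbf{I}-\mathbf{w})^{-1}$. Each node $i$ has an initial opinion $v_i^0$, a bias weight $w_{ii}^0$, and a total camp weight $\theta_i$. The good camp chooses $\mathbf{x^{(1)}},\mathbf{x^{(2)}}\ge 0$ with $\sum_i(x_i^{(1)}+x_i^{(2)})\le k_g$; the bad camp chooses $\mathbf{y^{(1)}},\mathbf{y^{(2)}}\ge 0$ with $\sum_i(y_i^{(1)}+y_i^{(2)})\le k_b$ ($k_g,k_b\ge0$). Opinions evolve by $\mathbf{v^{(0)}}=\mathbf{v^0}$ and for $p=1,2$: $\mathbf{v^{(p)}}=\Delta(\mathbf{w^0}\circ\mathbf{v^{(p-1)}}+\mathbf{w_g^{(p)}}\circ\mathbf{x^{(p)}}-\mathbf{w_b^{(p)}}\circ\mathbf{y^{(p)}})$, where $\circ$ is the entrywise product, $\mathbf{w^0}=(w_{ii}^0)_i$, $w_{ig}^{(p)}=\theta_i\frac{1+w_{ii}^0v_i^{(p-1)}}{2}$ and $w_{ib}^{(p)}=\theta_i\frac{1-w_{ii}^0v_i^{(p-1)}}{2}$.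 The good camp's utility is $\sum_i v_i^{(2)}$ and the bad camp's utility is $-\sum_i v_i^{(2)}$. *)

From HB Require Import structures.
From mathcomp Require Import all_boot all_order all_algebra.
Set Implicit Arguments. Unset Strict Implicit. Unset Printing Implicit Defensive.
Import Order.TTheory GRing.Theory Num.Theory.
Local Open Scope ring_scope.

Section Game.
Variables (R : realFieldType) (n : nat).

Definition Delta (w : 'M[R]_n) : 'M[R]_n := invmx (1%:M - w).

Definition wgood (theta w0 v : 'cV[R]_n) : 'cV[R]_n :=
  \col_i (theta i 0 * ((1 + w0 i 0 * v i 0) / 2)).
Definition wbad (theta w0 v : 'cV[R]_n) : 'cV[R]_n :=
  \col_i (theta i 0 * ((1 - w0 i 0 * v i 0) / 2)).

Definition phase (w : 'M[R]_n) (w0 theta v x y : 'cV[R]_n) : 'cV[R]_n :=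
  Delta w *m (\col_i (w0 i 0 * v i 0 + wgood theta w0 v i 0 * x i 0
                      - wbad theta w0 v i 0 * y i 0)).

Definition opinion2 (w : 'M[R]_n) (w0 theta v0 x1 x2 y1 y2 : 'cV[R]_n) :=
  phase w w0 theta (phase w w0 theta v0 x1 y1) x2 y2.

Definition good_utility w w0 theta v0 x1 x2 y1 y2 : R :=
  \sum_i opinion2 w w0 theta v0 x1 x2 y1 y2 i 0.
Definition bad_utility w w0 theta v0 x1 x2 y1 y2 : R :=
  - good_utility w w0 theta v0 x1 x2 y1 y2.

Definition invested (z1 z2 : 'cV[R]_n) : R := \sum_i (z1 i 0 + z2 i 0).

Definition feasible (k : R) (z1 z2 : 'cV[R]_n) : Prop :=
  (forall i, 0 <= z1 i 0) /\ (forall i, 0 <= z2 i 0) /\ invested z1 z2 <= k.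

Definition support (z : 'cV[R]_n) : {set 'I_n} := [set i : 'I_n | z i 0 != 0].
Definition at_most_one_node (z : 'cV[R]_n) : Prop :=
  (#|support z| <= 1)%N.

Definition good_best_response w w0 theta v0 kg (y1 y2 x1 x2 : 'cV[R]_n) : Prop :=
  feasible kg x1 x2 /\
  forall x1' x2', feasible kg x1' x2' ->
    good_utility w w0 theta v0 x1' x2' y1 y2 <= good_utility w w0 theta v0 x1 x2 y1 y2.

Definition bad_best_response w w0 theta v0 kb (x1 x2 y1 y2 : 'cV[R]_n) : Prop :=
  feasible kb y1 y2 /\
  forall y1' y2', feasible kb y1' y2' ->
    bad_utility w w0 theta v0 x1 x2 y1' y2' <= bad_utility w w0 theta v0 x1 x2 y1 y2.

End Game.

(* Each camp's payoff is biaffine in its two phase investments: v^(1) is affine in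
   the first-phase vector, and v^(2) is affine both in v^(1) and in the second-phase
   vector.  An affine function of a nonnegative vector with fixed total is maximised
   by putting the whole total on a node of largest coefficient, so it suffices to
   compare investments s e_i and t e_j.  On the triangle s, t >= 0, s + t <= k the
   payoff is P + Q s + T t + W s t; being affine in each variable it is maximised
   either at the origin or on the edge s + t = k, where it is a quadratic in s whose
   maximum on [0, k] exists in any ordered field. *)

From mathcomp Require Import all_boot all_order all_algebra.
From mathcomp Require Import ring lra.
Import Order.TTheory GRing.Theory Num.Theory.
Set Implicit Arguments. Unset Strict Implicit.
Local Open Scope ring_scope.

Section BestResponse.
Variable R : realFieldType.

Lemma ler_affine_endpoints (a b t u : R) :
  0 <= t -> t <= u -> a + b * t <= Num.max a (a + b * u).
Proof.
move=> t_ge0 t_le_u; rewrite le_max.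
have [b_ge0|b_lt0] := lerP 0 b; apply/orP; [right|left]; nra.
Qed.

Lemma quadratic_argmax (B C k : R) : 0 <= k ->
  exists2 s, 0 <= s <= k &
    forall t, 0 <= t <= k -> B * t + C * t ^+ 2 <= B * s + C * s ^+ 2.
Proof.
(* For C >= 0 the maximum is at an endpoint by convexity; for C < 0 it is at the
   point of [0, k] nearest to the vertex v, since then B t + C t^2 = C ((t - v)^2 - v^2). *)
move=> k_ge0; have [C_ge0|C_lt0] := lerP 0 C.
  have chord t : 0 <= t <= k ->
      k * (B * t + C * t ^+ 2) <= t * (B * k + C * k ^+ 2).
    case/andP=> t_ge0 t_le_k; rewrite -subr_ge0.
    have -> : t * (B * k + C * k ^+ 2) - k * (B * t + C * t ^+ 2)
              = C * t * k * (k - t) by ring.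
    by rewrite !mulr_ge0 // subr_ge0.
  have [k_le0|k_gt0] := lerP k 0.
    by exists 0 => [|t /andP[t_ge0 t_le_k]]; rewrite ?lexx //; have -> : t = 0 by lra.
  have [gk_ge0|gk_lt0] := lerP 0 (B * k + C * k ^+ 2).
    exists k => [|t /[dup] /andP[t_ge0 t_le_k] /chord]; rewrite ?lexx ?andbT //.
    move=> chord_t; rewrite -(ler_pM2l k_gt0); apply: le_trans chord_t _.
    by rewrite ler_wpM2r.
  exists 0 => [|t /[dup] /andP[t_ge0 t_le_k] /chord]; rewrite ?lexx //.
  move=> chord_t; rewrite -(ler_pM2l k_gt0); apply: le_trans chord_t _.
  by have := mulr_ge0_le0 t_ge0 (ltW gk_lt0); rewrite expr2; lra.
pose v := - B / (2 * C).
have B_def : B = - (2 * C) * v by rewrite /v; field; rewrite (ltr0_neq0 C_lt0).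
rewrite B_def.
have [v_lt0|v_ge0] := ltrP v 0.
  exists 0 => [|t /andP[t_ge0 t_le_k]]; rewrite ?lexx // !expr2.
  have : 0 <= t * (t - 2 * v) by rewrite mulr_ge0 //; lra.
  nra.
have [k_lt_v|v_le_k] := ltrP k v.
  exists k => [|t /andP[t_ge0 t_le_k]]; rewrite ?lexx ?andbT // !expr2.
  have : 0 <= (k - t) * (2 * v - t - k) by rewrite mulr_ge0 //; lra.
  nra.
exists v => [|t _]; first by rewrite v_ge0.
have := sqr_ge0 (t - v); rewrite !expr2; nra.
Qed.

Lemma biaffine_triangle_max (f : R -> R -> R) (P Q T W k : R) :
    (forall s t, f s t = P + Q * s + T * t + W * s * t) -> 0 <= k ->
  exists2 s, 0 <= s <= k & forall t1 t2, 0 <= t1 -> 0 <= t2 -> t1 + t2 <= k ->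
    f t1 t2 <= Num.max (f 0 0) (f s (k - s)).
Proof.
move=> fE k_ge0.
have [s s_in s_max] := quadratic_argmax (Q - T + W * k) (- W) k_ge0.
have edge_max t : 0 <= t <= k -> f t (k - t) <= f s (k - s).
  move=> /s_max; rewrite !fE !expr2; lra.
exists s => // t1 t2 t1_ge0 t2_ge0 t12_le_k.
have along_t1 : f t1 t2 <= Num.max (f 0 t2) (f (k - t2) t2).
  have fE1 s' : f s' t2 = (P + T * t2) + (Q + W * t2) * s' by rewrite fE; ring.
  by rewrite !fE1 mulr0 addr0 ler_affine_endpoints //; lra.
have along_t2 : f 0 t2 <= Num.max (f 0 0) (f 0 k).
  have fE2 t : f 0 t = P + T * t by rewrite fE; ring.
  by rewrite !fE2 mulr0 addr0 ler_affine_endpoints //; lra.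
have edge0 : f 0 k <= f s (k - s).
  by have := edge_max 0; rewrite subr0 lexx k_ge0; apply.
have edge_t2 : f (k - t2) t2 <= f s (k - s).
  by have := edge_max (k - t2); rewrite subKr; apply; lra.
apply: (le_trans along_t1); rewrite ge_max (le_trans along_t2) /=.
  by rewrite le_max edge_t2 orbT.
by rewrite ge_max !le_max lexx edge0 orbT.
Qed.

Definition affine_map m p (f : 'cV[R]_m -> 'cV[R]_p) :=
  exists (A : 'M[R]_(p, m)) (b : 'cV[R]_p), forall z, f z = A *m z + b.

Definition affine_fun m (f : 'cV[R]_m -> R) :=
  exists (a : 'rV[R]_m) (c : R), forall z, f z = (a *m z) 0 0 + c.

Lemma affine_map_comp m p q (f : 'cV[R]_m -> 'cV[R]_p) (g : 'cV[R]_p -> 'cV[R]_q) :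
  affine_map f -> affine_map g -> affine_map (g \o f).
Proof.
move=> [A [b fE]] [B [c gE]]; exists (B *m A), (B *m b + c) => z.
by rewrite /= fE gE mulmxDr mulmxA addrA.
Qed.

Lemma affine_map_entrywise m p (f : 'cV[R]_m -> 'cV[R]_p) (M : 'M[R]_(p, m))
    (a b : 'I_m -> R) :
  (forall z, f z = M *m \col_i (a i * z i 0 + b i)) -> affine_map f.
Proof.
move=> fE; exists (M *m diag_mx (\row_i a i)), (M *m \col_i b i) => z.
rewrite fE -mulmxA -mulmxDr; congr (_ *m _); apply/matrixP => i j.
by rewrite mul_diag_mx !mxE [j]ord1.
Qed.

Lemma affine_fun_sum m p (f : 'cV[R]_m -> 'cV[R]_p) :
  affine_map f -> affine_fun (fun z => \sum_i f z i 0).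
Proof.
move=> [A [b fE]]; exists (const_mx 1 *m A), (\sum_i b i 0) => z.
rewrite -mulmxA mxE -big_split; apply: eq_bigr => i _.
by rewrite fE !mxE mul1r.
Qed.

Lemma affine_funN m (f : 'cV[R]_m -> R) :
  affine_fun f -> affine_fun (fun z => - f z).
Proof.
move=> [a [c fE]]; exists (- a), (- c) => z.
by rewrite fE mulNmx opprD !mxE.
Qed.

Definition single m (i : 'I_m) (s : R) : 'cV[R]_m := s *: delta_mx i 0.

Lemma single0 m (i : 'I_m) : single i 0 = 0.
Proof. exact: scale0r. Qed.

Lemma single_ge0 m (i : 'I_m) s : 0 <= s -> forall l, 0 <= single i s l 0.
Proof. by move=> s_ge0 l; rewrite !mxE mulr_ge0 ?ler0n. Qed.

Lemma sum_single m (i : 'I_m) s : \sum_l single i s l 0 = s.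
Proof.
rewrite (bigD1 i) //= big1 => [|l /negbTE l_neq_i]; first by rewrite !mxE !eqxx mulr1 addr0.
by rewrite !mxE l_neq_i mulr0.
Qed.

Lemma at_most_one_node0 m : at_most_one_node (0 : 'cV[R]_m).
Proof.
rewrite /at_most_one_node (_ : support 0 = set0) ?cards0 //.
by apply/setP => l; rewrite !inE mxE eqxx.
Qed.

Lemma at_most_one_node_single m (i : 'I_m) s : at_most_one_node (single i s).
Proof.
rewrite /at_most_one_node -(cards1 i) subset_leq_card //; apply/subsetP => l.
by rewrite !inE !mxE; case: (l =P i) => // _; rewrite mulr0 eqxx.
Qed.

Lemma invested_single m (i j : 'I_m) s t : invested (single i s) (single j t) = s + t.
Proof. by rewrite /invested big_split !sum_single. Qed.

Lemma feasible_single m k (i j : 'I_m) s t :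
  0 <= s -> 0 <= t -> s + t <= k -> feasible k (single i s) (single j t).
Proof.
move=> s_ge0 t_ge0 st_le_k; rewrite /feasible invested_single.
by do !split=> //; apply: single_ge0.
Qed.

Lemma invested0 m : invested (0 : 'cV[R]_m) 0 = 0.
Proof. by rewrite /invested big1 // => l _; rewrite mxE addr0. Qed.

Lemma feasible0 m k : 0 <= k -> feasible k (0 : 'cV[R]_m) 0.
Proof.
by move=> k_ge0; rewrite /feasible invested0; do !split=> //; move=> l; rewrite mxE.
Qed.

Lemma affine_fun_single m (f : 'cV[R]_m -> R) (i : 'I_m) s : affine_fun f ->
  f (single i s) = f 0 + s * (f (single i 1) - f 0).
Proof.
move=> [a [c fE]]; rewrite !fE /single -!scalemxAr mulmx0 -colE !mxE; ring.
Qed.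

Lemma affine_fun_concentrate m (f : 'cV[R]_m -> R) (i0 : 'I_m) (x : 'cV[R]_m) :
  affine_fun f -> (forall l, 0 <= x l 0) ->
  exists i, f x <= f (single i (\sum_l x l 0)).
Proof.
move=> [a [c fE]] x_ge0; pose i := [arg max_(i > i0) a 0 i]%O.
exists i; rewrite !fE lerD2r /single -scalemxAr -colE !mxE mulr_suml.
apply: ler_sum => l _; rewrite mulrC ler_wpM2l //.
by rewrite /i; case: arg_maxP => // j _; apply.
Qed.

Section Biaffine.
Variables (m : nat) (U : 'cV[R]_m -> 'cV[R]_m -> R).
Hypothesis U_affine1 : forall x2, affine_fun (U^~ x2).
Hypothesis U_affine2 : forall x1, affine_fun (U x1).

Lemma biaffine_on_singles i j : exists P Q T W, forall s t,
  U (single i s) (single j t) = P + Q * s + T * t + W * s * t.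
Proof.
pose u s t := U (single i s) (single j t).
exists (u 0 0), (u 1 0 - u 0 0), (u 0 1 - u 0 0), (u 1 1 - u 1 0 - u 0 1 + u 0 0).
move=> s t; rewrite /u /= !single0.
have /= -> := affine_fun_single i s (U_affine1 (single j t)).
have -> := affine_fun_single j t (U_affine2 0).
have -> := affine_fun_single j t (U_affine2 (single i 1)).
by ring.
Qed.

Lemma singles_triangle_max k i j : 0 <= k ->
  exists2 s, 0 <= s <= k & forall t1 t2, 0 <= t1 -> 0 <= t2 -> t1 + t2 <= k ->
    U (single i t1) (single j t2) <= Num.max (U 0 0) (U (single i s) (single j (k - s))).
Proof.
move=> k_ge0; have [P [Q [T [W UE]]]] := biaffine_on_singles i j.
by have := biaffine_triangle_max UE k_ge0; rewrite /= !single0.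
Qed.

Lemma biaffine_budget_bound k (i0 : 'I_m) : 0 <= k ->
  exists i j, exists2 s, 0 <= s <= k & forall x1 x2, feasible k x1 x2 ->
    U x1 x2 <= Num.max (U 0 0) (U (single i s) (single j (k - s))).
Proof.
move=> k_ge0.
have [s s_in s_max] :=
  fin_all_exists2 (fun p : 'I_m * 'I_m => singles_triangle_max p.1 p.2 k_ge0).
pose val p := U (single p.1 (s p)) (single p.2 (k - s p)).
pose p0 := [arg max_(p > (i0, i0)) val p]%O.
have val_max p : val p <= val p0 by rewrite /p0; case: arg_maxP => // q _; apply.
exists p0.1, p0.2, (s p0) => // x1 x2 [x1_ge0 [x2_ge0]].
rewrite /invested big_split /= => x_le_k.
have [i Ui] := affine_fun_concentrate i0 (U_affine1 x2) x1_ge0.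
have [j Uj] := affine_fun_concentrate i0 (U_affine2 (single i (\sum_l x1 l 0))) x2_ge0.
apply: le_trans Ui _; apply: le_trans Uj _.
apply: le_trans (s_max (i, j) _ _ _ _ _) _; rewrite ?sumr_ge0 //.
by rewrite ge_max !le_max lexx (val_max (i, j)) orbT.
Qed.

Lemma biaffine_budget_max k : 0 <= k ->
  exists x1 x2, (feasible k x1 x2 /\
      forall x1' x2', feasible k x1' x2' -> U x1' x2' <= U x1 x2) /\
    (invested x1 x2 = k \/ invested x1 x2 = 0) /\
    at_most_one_node x1 /\ at_most_one_node x2.
Proof.
move=> k_ge0; have [m0|m_gt0] := posnP m.
  have cV0 x : x = 0 :> 'cV[R]_m.
    by apply/matrixP => -[l l_lt_m]; have : (l < 0)%N by rewrite -m0.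
  exists 0, 0; split; first split=> [|x1 x2 _]; [exact: feasible0 | by rewrite [x1]cV0 [x2]cV0 |].
  by rewrite invested0; split; [right | split; exact: at_most_one_node0].
have [i [j [s /andP[s_ge0 s_le_k] U_bound]]] := biaffine_budget_bound (Ordinal m_gt0) k_ge0.
have [single_le_zero|zero_lt_single] := lerP (U (single i s) (single j (k - s))) (U 0 0).
  exists 0, 0; split; first split=> [|x1 x2 /U_bound]; [exact: feasible0 | by rewrite max_l |].
  by rewrite invested0; split; [right | split; exact: at_most_one_node0].
exists (single i s), (single j (k - s)); split.
  split=> [|x1 x2 /U_bound]; last by rewrite max_r // ltW.
  by apply: feasible_single; rewrite ?subr_ge0 ?subrKC.
by rewrite invested_single subrKC; split; [left | split; exact: at_most_one_node_single].
Qed.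
End Biaffine.

Lemma phase_affine_v n (w : 'M[R]_n) w0 theta x y :
  affine_map (fun v => phase w w0 theta v x y).
Proof.
apply: (affine_map_entrywise (M := Delta w)
  (a := fun i => w0 i 0 + theta i 0 * w0 i 0 * (x i 0 + y i 0) / 2)
  (b := fun i => theta i 0 * (x i 0 - y i 0) / 2)) => v.
by congr (_ *m _); apply/matrixP => i j; rewrite !mxE; ring.
Qed.

Lemma phase_affine_x n (w : 'M[R]_n) w0 theta v y :
  affine_map (fun x => phase w w0 theta v x y).
Proof.
apply: (affine_map_entrywise (M := Delta w) (a := fun i => wgood theta w0 v i 0)
  (b := fun i => w0 i 0 * v i 0 - wbad theta w0 v i 0 * y i 0)) => x.
by congr (_ *m _); apply/matrixP => i j; rewrite !mxE; ring.
Qed.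

Lemma phase_affine_y n (w : 'M[R]_n) w0 theta v x :
  affine_map (fun y => phase w w0 theta v x y).
Proof.
apply: (affine_map_entrywise (M := Delta w) (a := fun i => - wbad theta w0 v i 0)
  (b := fun i => w0 i 0 * v i 0 + wgood theta w0 v i 0 * x i 0)) => y.
by congr (_ *m _); apply/matrixP => i j; rewrite !mxE; ring.
Qed.

Lemma good_utility_affine1 n (w : 'M[R]_n) w0 theta v0 x2 y1 y2 :
  affine_fun (fun x1 => good_utility w w0 theta v0 x1 x2 y1 y2).
Proof.
exact/affine_fun_sum/(affine_map_comp (phase_affine_x _ _ _ _ _)
                                    (phase_affine_v _ _ _ _ _)).
Qed.

Lemma good_utility_affine2 n (w : 'M[R]_n) w0 theta v0 x1 y1 y2 :
  affine_fun (fun x2 => good_utility w w0 theta v0 x1 x2 y1 y2).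
Proof. exact/affine_fun_sum/phase_affine_x. Qed.

Lemma bad_utility_affine1 n (w : 'M[R]_n) w0 theta v0 x1 x2 y2 :
  affine_fun (fun y1 => bad_utility w w0 theta v0 x1 x2 y1 y2).
Proof.
exact/affine_funN/affine_fun_sum/(affine_map_comp (phase_affine_y _ _ _ _ _)
                                    (phase_affine_v _ _ _ _ _)).
Qed.

Lemma bad_utility_affine2 n (w : 'M[R]_n) w0 theta v0 x1 x2 y1 :
  affine_fun (fun y2 => bad_utility w w0 theta v0 x1 x2 y1 y2).
Proof. exact/affine_funN/affine_fun_sum/phase_affine_y. Qed.
End BestResponse.

Theorem lemma2 (R : realFieldType) (n : nat) (w : 'M[R]_n)
  (v0 w0 theta : 'cV[R]_n) (kg kb : R) :
  (forall i : 'I_n, \sum_j `|w i j| < 1) ->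
  0 <= kg -> 0 <= kb ->
  (forall y1 y2 : 'cV[R]_n, feasible kb y1 y2 ->
     exists x1 x2 : 'cV[R]_n,
       good_best_response w w0 theta v0 kg y1 y2 x1 x2 /\
       (invested x1 x2 = kg \/ invested x1 x2 = 0) /\
       at_most_one_node x1 /\ at_most_one_node x2) /\
  (forall x1 x2 : 'cV[R]_n, feasible kg x1 x2 ->
     exists y1 y2 : 'cV[R]_n,
       bad_best_response w w0 theta v0 kb x1 x2 y1 y2 /\
       (invested y1 y2 = kb \/ invested y1 y2 = 0) /\
       at_most_one_node y1 /\ at_most_one_node y2).
Proof.
(* The row-sum condition only makes I - w invertible; the payoffs are biaffine
   for any matrix Delta w. *)
move=> _ kg_ge0 kb_ge0; split=> [y1 y2 _ | x1 x2 _].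
  apply: (biaffine_budget_max (U := fun x1 x2 => good_utility w w0 theta v0 x1 x2 y1 y2)) kg_ge0.
    by move=> x2; apply: good_utility_affine1.
  by move=> x1; apply: good_utility_affine2.
apply: (biaffine_budget_max (U := fun y1 y2 => bad_utility w w0 theta v0 x1 x2 y1 y2)) kb_ge0.
  by move=> y2; apply: bad_utility_affine1.
by move=> y1; apply: bad_utility_affine2.
Qed.
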